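(* Fix $0<p\le\infty$. Let $t(x_1,\dots,x_n)$ and $s(x_1,\dots,x_n)$ be terms built from variables $x_1,\dots,x_n$, constants $r\in[0,\infty]$, and the binary operations $\otimes,\otimes^*,\oplus_p,\oplus^*_p$. Suppose that $t(a_1,\dots,a_n)\le s(a_1,\dots,a_n)$ for all $a_1,\dots,a_n\in[0,\infty]$ (operations evaluated in $[0,\infty]$). Then in any counary calculus (with $p$-structures as below) that contains the rule EFQ ($0$ / $\Gamma\vdash\Delta$ for all cedents $\Gamma,\Delta$), the rule $$\frac{t(\Gamma_1\vdash\Delta_1,\dots,\Gamma_n\vdash\Delta_n)}{s(\Gamma_1\vdash\Delta_1,\dots,\Gamma_n\vdash\Delta_n)}$$ (obtained by substituting sequents for the variables and reading the operations as formal structure operations) is admissible.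
   Context: Alethic values: $[0,\infty]$ with its usual order. Conjunctive multiplication $\otimes$ is the usual product on $(0,\infty)$, with $0\otimes a=a\otimes 0=0$ for all $a\in[0,\infty]$ and $a\otimes\infty=\infty\otimes a=\infty$ for $a\in(0,\infty]$. Inversion: $0^*=\infty$, $\infty^*=0$, $a^*=1/a$ otherwise. Disjunctive multiplication $a\otimes^* b:=(a^*\otimes b^* )^*$. Sum $\oplus$ is ordinary addition with $a\oplus\infty=\infty$; harmonic sum $a\oplus^*b:=(a^*\oplus b^* )^*$. For $0<p<\infty$ (conventions $0^p=0$, $\infty^p=\infty$): $a\oplus_p b:=(a^p\oplus b^p)^{1/p}$, $a\oplus^*_p b:=(a^p\oplus^* b^p)^{1/p}$; for $p=\infty$: $a\oplus_\infty b:=\max(a,b)$, $a\oplus^*_\infty b:=\min(a,b)$. Quantitative ($p$-hard) calculi: fix a set of formulas; a sequent is $\Gamma\vdash\Delta$ with $\Gamma,\Delta$ finite multisets of formulas. Structures: $H::=(\Gamma\vdash\Delta)\mid r\mid H\otimes H\mid H\otimes^*H\mid H\oplus_pH\mid H\oplus^*_pH$, $r\in[0,\infty]$ (formal operations). A structure with no sequent is closed and evaluates in $[0,\infty]$ to its validity. A rule is a schema $H/H'$ (premise structure, conclusion structure); a calculus is a set of rules; it is counary if every rule's conclusion is a single sequent. Derivations are defined inductively: identity $H/H$; rule instances; vertical composition of derivations $H\to I$ and $I\to K$; for $\ast\in\{\otimes,\otimes^*,\oplus_p,\oplus^*_p\}$, from derivations $H_1\to K_1$ and $H_2\to K_2$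 a derivation $H_1\ast H_2\to K_1\ast K_2$. A closed derivation has closed top structure; its validity is the value of that top. The provability $\|K\|_R$ of a structure $K$ in calculus $R$ is the supremum of validities of closed derivations in $R$ with bottom structure $K$ ($0$ if none). A rule is admissible in $R$ if adding it to $R$ does not change the provability of any structure. *)

From HB Require Import structures.
From mathcomp Require Import all_boot all_order all_algebra.
From mathcomp Require Import finmap multiset.
From mathcomp Require Import boolp classical_sets reals constructive_ereal ereal exp.
Set Implicit Arguments. Unset Strict Implicit. Unset Printing Implicit Defensive.
Import Order.TTheory GRing.Theory Num.Theory.
Local Open Scope ring_scope.
Local Open Scope ereal_scope.

(* Alethic values [0,oo] are represented inside \bar R (nonnegativity is
   imposed explicitly where needed). *)
Section Alethic.
Variable R : realType.

Definition ainv (a : \bar R) : \bar R :=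
  match a with
  | x%:E => if x == 0%R then +oo else (x^-1)%:E
  | +oo => 0
  | -oo => 0 (* junk, never used on [0,oo] *)
  end.

(* conjunctive multiplication: 0 absorbs, then a*oo = oo for a > 0 *)
Definition atens (a b : \bar R) : \bar R :=
  if (a == 0) || (b == 0) then 0 else a * b.

Definition apar (a b : \bar R) : \bar R := ainv (atens (ainv a) (ainv b)).

Definition asum (a b : \bar R) : \bar R := a + b.
Definition ahsum (a b : \bar R) : \bar R := ainv (asum (ainv a) (ainv b)).

(* real power on [0,oo], with 0^q = 0 and oo^q = oo for 0 < q < oo *)
Definition apow (a : \bar R) (q : R) : \bar R :=
  match a with
  | x%:E => (powR x q)%:E
  | +oo => +oo
  | -oo => -oo
  end.

(* p is an element of (0,oo]; p = +oo stands for p = infinity *)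
Definition asum_p (p : \bar R) (a b : \bar R) : \bar R :=
  match p with
  | q%:E => apow (asum (apow a q) (apow b q)) (q^-1)
  | _ => maxe a b
  end.

Definition ahsum_p (p : \bar R) (a b : \bar R) : \bar R :=
  match p with
  | q%:E => apow (ahsum (apow a q) (apow b q)) (q^-1)
  | _ => mine a b
  end.

End Alethic.

Inductive aop := OTens | OPar | OSum | OHsum.

Definition aop_eval (R : realType) (p : \bar R) (o : aop) : \bar R -> \bar R -> \bar R :=
  match o with
  | OTens => @atens R
  | OPar => @apar R
  | OSum => asum_p p
  | OHsum => ahsum_p p
  end.

Inductive term (R : realType) (n : nat) :=
  | TVar of 'I_n
  | TCst of \bar R
  | TOp of aop & term R n & term R n.

Fixpoint term_nonneg (R : realType) (n : nat) (t : term R n) : Prop :=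
  match t with
  | TVar _ => True
  | TCst r => 0 <= r
  | TOp _ t1 t2 => term_nonneg t1 /\ term_nonneg t2
  end.

Fixpoint term_eval (R : realType) (p : \bar R) (n : nat) (a : 'I_n -> \bar R)
  (t : term R n) : \bar R :=
  match t with
  | TVar i => a i
  | TCst r => r
  | TOp o t1 t2 => aop_eval p o (term_eval p a t1) (term_eval p a t2)
  end.

(* structures over formulas F; cedents are finite multisets *)
Inductive struc (R : realType) (F : choiceType) :=
  | SSeq of multiset F & multiset F
  | SCst of \bar R
  | SOp of aop & struc R F & struc R F.
Arguments SSeq {R F}. Arguments SCst {R F}. Arguments SOp {R F}.
Arguments TVar {R n}. Arguments TCst {R n}. Arguments TOp {R n}.

Fixpoint struc_nonneg (R : realType) (F : choiceType) (H : struc R F) : Prop :=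
  match H with
  | SSeq _ _ => True
  | SCst r => 0 <= r
  | SOp _ H1 H2 => struc_nonneg H1 /\ struc_nonneg H2
  end.

Fixpoint closed (R : realType) (F : choiceType) (H : struc R F) : Prop :=
  match H with
  | SSeq _ _ => False
  | SCst _ => True
  | SOp _ H1 H2 => closed H1 /\ closed H2
  end.

(* value of a structure; only meaningful for closed structures *)
Fixpoint struc_eval (R : realType) (F : choiceType) (p : \bar R) (H : struc R F)
  : \bar R :=
  match H with
  | SSeq _ _ => 0
  | SCst r => r
  | SOp o H1 H2 => aop_eval p o (struc_eval p H1) (struc_eval p H2)
  end.

Fixpoint term_subst (R : realType) (F : choiceType) (n : nat)
  (sg : 'I_n -> multiset F * multiset F) (t : term R n) : struc R F :=
  match t with
  | TVar i => SSeq (sg i).1 (sg i).2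
  | TCst r => SCst r
  | TOp o t1 t2 => SOp o (term_subst sg t1) (term_subst sg t2)
  end.

(* a calculus = set of rule instances (premise structure, conclusion structure) *)
Definition calculus (R : realType) (F : choiceType) := struc R F -> struc R F -> Prop.

(* all structures occurring in rules are p-structures: constants in [0,oo] *)
Definition calc_wf (R : realType) (F : choiceType) (C : calculus R F) : Prop :=
  forall H H', C H H' -> struc_nonneg H /\ struc_nonneg H'.

Definition counary (R : realType) (F : choiceType) (C : calculus R F) : Prop :=
  forall H H', C H H' -> exists G D, H' = SSeq G D.

Definition has_EFQ (R : realType) (F : choiceType) (C : calculus R F) : Prop :=
  forall G D : multiset F, C (SCst 0) (SSeq G D).

(* derivations: deriv C H K means there is a derivation with top H, bottom K *)
Inductive deriv (R : realType) (F : choiceType) (C : calculus R F)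
  : struc R F -> struc R F -> Prop :=
  | d_id H : deriv C H H
  | d_rule H H' : C H H' -> deriv C H H'
  | d_comp H I K : deriv C H I -> deriv C I K -> deriv C H K
  | d_op o H1 K1 H2 K2 : deriv C H1 K1 -> deriv C H2 K2 ->
      deriv C (SOp o H1 H2) (SOp o K1 K2).

Definition validities (R : realType) (F : choiceType) (p : \bar R)
  (C : calculus R F) (K : struc R F) : set (\bar R) :=
  [set x | exists H, closed H /\ deriv C H K /\ x = struc_eval p H].

Definition provability (R : realType) (F : choiceType) (p : \bar R)
  (C : calculus R F) (K : struc R F) : \bar R :=
  if pselect (validities p C K = set0) is left _ then 0
  else ereal_sup (validities p C K).

Definition add_rule (R : realType) (F : choiceType) (C N : calculus R F) : calculus R F :=
  fun H H' => C H H' \/ N H H'.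

Definition admissible (R : realType) (F : choiceType) (p : \bar R)
  (C N : calculus R F) : Prop :=
  forall K : struc R F, struc_nonneg K ->
    provability p (add_rule C N) K = provability p C K.

Definition term_rule (R : realType) (F : choiceType) (n : nat) (t s : term R n)
  : calculus R F :=
  fun H H' => exists sg : 'I_n -> multiset F * multiset F,
    H = term_subst sg t /\ H' = term_subst sg s.

From Pilot Require Import Defs.
From HB Require Import structures.
From mathcomp Require Import all_boot all_order all_algebra.
From mathcomp Require Import finmap multiset.
From mathcomp Require Import boolp classical_sets reals constructive_ereal ereal exp.
Set Implicit Arguments. Unset Strict Implicit.
Import Order.TTheory GRing.Theory Num.Theory.
Local Open Scope ring_scope.
Local Open Scope ereal_scope.

(* In a counary calculus no rule produces a formal operation or a constant, so
   a closed derivation of [t(G1|-D1,...,Gn|-Dn)] splits, following the shape of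
   [t], into closed derivations of the sequents [Gi|-Di] (EFQ supplies one of
   validity 0 for sequents that [t] does not reach, and of two derivations of
   the same sequent we keep the better one). Since every operation is monotone
   on [0,oo], the validity of the original derivation is at most [t] evaluated
   at their validities, hence at most [s] evaluated at them, which is the
   validity of the derivation of [s(G1|-D1,...,Gn|-Dn)] obtained by plugging
   them into [s]. Every use of the new rule can thus be eliminated without loss
   of validity, so provability does not change. *)

Section AlethicOperations.
Variable R : realType.
Implicit Types (a b c d : \bar R) (q : R).

Lemma ainv_ge0 a : 0 <= a -> 0 <= ainv a.
Proof.
case: a => [x||] //= x0; case: ifP => // /negbT xn0.
by rewrite lee_fin invr_ge0 -lee_fin.
Qed.

Lemma le_ainv a b : 0 <= a -> a <= b -> ainv b <= ainv a.
Proof.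
case: a => [x||]; case: b => [y||] //= x0 xy; last first.
  by case: ifP => // _; rewrite lee_fin invr_ge0 -lee_fin.
rewrite !lee_fin in x0 xy *.
case: ifP => [/eqP y0|/negbT yn0].
  have -> : x = 0%R by apply/eqP; rewrite eq_le x0 -y0 xy.
  by rewrite eqxx.
case: ifP => [_|/negbT xn0]; first by rewrite leey.
have xp : (0 < x)%R by rewrite lt0r xn0.
by rewrite lee_fin lef_pV2 ?posrE // (lt_le_trans xp).
Qed.

Lemma atens_ge0 a b : 0 <= a -> 0 <= b -> 0 <= atens a b.
Proof. by move=> a0 b0; rewrite /atens; case: ifP => // _; exact: mule_ge0. Qed.

Lemma le_atens a b c d : 0 <= a -> 0 <= b -> a <= c -> b <= d ->
  atens a b <= atens c d.
Proof.
move=> a0 b0 ac bd; rewrite /atens.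
case: ifP => [_|/negbT]; first exact: atens_ge0 (le_trans a0 ac) (le_trans b0 bd).
rewrite negb_or => /andP[an0 bn0].
have nonzero_above (x y : \bar R) : 0 <= x -> x != 0 -> x <= y -> (y == 0) = false.
  move=> x0 xn0 xy; apply/negbTE; apply: contra xn0 => /eqP y0.
  by rewrite eq_le x0 -y0 xy.
by rewrite (nonzero_above a) // (nonzero_above b) //=; apply: lee_pmul.
Qed.

Lemma apar_ge0 a b : 0 <= a -> 0 <= b -> 0 <= apar a b.
Proof. by move=> a0 b0; apply/ainv_ge0/atens_ge0; exact: ainv_ge0. Qed.

Lemma le_apar a b c d : 0 <= a -> 0 <= b -> a <= c -> b <= d ->
  apar a b <= apar c d.
Proof.
move=> a0 b0 ac bd; have c0 := le_trans a0 ac; have d0 := le_trans b0 bd.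
by rewrite le_ainv ?atens_ge0 ?ainv_ge0 ?le_atens ?ainv_ge0 ?le_ainv.
Qed.

Lemma ahsum_ge0 a b : 0 <= a -> 0 <= b -> 0 <= ahsum a b.
Proof. by move=> a0 b0; rewrite ainv_ge0 ?adde_ge0 ?ainv_ge0. Qed.

Lemma le_ahsum a b c d : 0 <= a -> 0 <= b -> a <= c -> b <= d ->
  ahsum a b <= ahsum c d.
Proof.
move=> a0 b0 ac bd; have c0 := le_trans a0 ac; have d0 := le_trans b0 bd.
by rewrite le_ainv ?adde_ge0 ?ainv_ge0 ?leeD ?le_ainv.
Qed.

Lemma apow_ge0 a q : 0 <= a -> 0 <= apow a q.
Proof. by case: a => [x||] //= _; rewrite lee_fin powR_ge0. Qed.

Lemma le_apow a b q : (0 <= q)%R -> 0 <= a -> a <= b -> apow a q <= apow b q.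
Proof.
move=> q0; case: a => [x||]; case: b => [y||] //= x0 xy; rewrite ?leey //.
rewrite !lee_fin in x0 xy *.
by apply: ge0_ler_powR; rewrite ?nnegrE // (le_trans x0).
Qed.

Variable p : \bar R.

Lemma aop_eval_ge0 o a b : 0 <= a -> 0 <= b -> 0 <= aop_eval p o a b.
Proof.
move=> a0 b0; case: o => /=; [exact: atens_ge0|exact: apar_ge0| |].
- case: p => [q||] /=; rewrite ?le_max ?a0 //.
  by rewrite apow_ge0 ?adde_ge0 ?apow_ge0.
- case: p => [q||] /=; rewrite ?le_min ?a0 ?b0 //.
  by rewrite apow_ge0 ?ahsum_ge0 ?apow_ge0.
Qed.

Hypothesis p_gt0 : 0 < p.

Lemma le_aop_eval o a b c d : 0 <= a -> 0 <= b -> a <= c -> b <= d ->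
  aop_eval p o a b <= aop_eval p o c d.
Proof.
move=> a0 b0 ac bd; case: o => /=; [exact: le_atens|exact: le_apar| |].
- move: p_gt0; case: p => [q||] //= q0; last exact: le_max2.
  have q0' : (0 <= q)%R by rewrite -lee_fin ltW.
  by rewrite le_apow ?invr_ge0 ?adde_ge0 ?apow_ge0 ?leeD ?le_apow.
- move: p_gt0; case: p => [q||] //= q0; last exact: le_min2.
  have q0' : (0 <= q)%R by rewrite -lee_fin ltW.
  by rewrite le_apow ?invr_ge0 ?ahsum_ge0 ?apow_ge0 ?le_ahsum ?apow_ge0 ?le_apow.
Qed.

Lemma term_eval_ge0 n (a : 'I_n -> \bar R) (t : term R n) :
  (forall i, 0 <= a i) -> term_nonneg t -> 0 <= term_eval p a t.
Proof.
move=> a0; elim: t => [i|r|o t1 IH1 t2 IH2] //= [/IH1 ? /IH2 ?].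
exact: aop_eval_ge0.
Qed.

Lemma le_term_eval n (a b : 'I_n -> \bar R) (t : term R n) :
  (forall i, 0 <= a i) -> (forall i, a i <= b i) ->
  term_nonneg t -> term_eval p a t <= term_eval p b t.
Proof.
move=> a0 ab; elim: t => [i|r|o t1 IH1 t2 IH2] //= [t1n t2n].
by rewrite le_aop_eval ?term_eval_ge0 ?IH1 ?IH2.
Qed.

End AlethicOperations.

Section Derivations.
Variables (R : realType) (F : choiceType) (p : \bar R).
Implicit Types (C N : calculus R F) (H K : struc R F).

Lemma struc_eval_ge0 H : Defs.closed H -> struc_nonneg H -> 0 <= struc_eval p H.
Proof.
elim: H => [G D|r|o H1 IH1 H2 IH2] //= [c1 c2] [n1 n2].
by rewrite aop_eval_ge0 ?IH1 ?IH2.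
Qed.

Lemma calc_wf_add_rule C N : calc_wf C -> calc_wf N -> calc_wf (add_rule C N).
Proof. by move=> wfC wfN H H' [/wfC|/wfN]. Qed.

Lemma deriv_struc_nonneg C H K : calc_wf C -> Defs.deriv C H K ->
  struc_nonneg K -> struc_nonneg H.
Proof.
move=> wf; elim => {H K} [H|H H' /wf []|H I K _ IH1 _ IH2|o H1 K1 H2 K2 _ IH1 _ IH2] //.
- by move=> /IH2 /IH1.
- by move=> /= [/IH1 ? /IH2 ?].
Qed.

Lemma sub_deriv C N H K : (forall A B, C A B -> N A B) ->
  Defs.deriv C H K -> Defs.deriv N H K.
Proof.
move=> CN; elim => {H K} [H|H H' /CN|H I K _ IH1 _ IH2|o H1 K1 H2 K2 _ IH1 _ IH2].
- exact: d_id.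
- exact: d_rule.
- exact: d_comp IH1 IH2.
- exact: d_op.
Qed.

Definition rule_dominated C N := forall H H', N H H' ->
  forall H0, Defs.closed H0 -> Defs.deriv C H0 H ->
  exists K0, [/\ Defs.closed K0, Defs.deriv C K0 H' & struc_eval p H0 <= struc_eval p K0].

Section Counary.
Variable C : calculus R F.
Hypothesis C_counary : counary C.

Lemma deriv_SOp_inv H o X Y : Defs.deriv C H (SOp o X Y) ->
  exists H1 H2, [/\ H = SOp o H1 H2, Defs.deriv C H1 X & Defs.deriv C H2 Y].
Proof.
move E : (SOp o X Y) => K D; elim: D o X Y E
  => {H K} [H|H H' /C_counary [G [D ->]]|H I K _ IH1 _ IH2|o' H1 K1 H2 K2 D1 _ D2 _] //.
- by move=> o X Y <-; exists X, Y; split => //; exact: d_id.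
- move=> o X Y /IH2 [I1 [I2 [EI DI1 DI2]]].
  have [H1 [H2 [-> DH1 DH2]]] := IH1 _ _ _ (esym EI).
  by exists H1, H2; split; [|exact: d_comp DH1 DI1|exact: d_comp DH2 DI2].
- by move=> o X Y [-> -> ->]; exists H1, H2.
Qed.

Lemma deriv_SCst_inv H r : Defs.deriv C H (SCst r) -> H = SCst r.
Proof.
move E : (SCst r) => K D; rewrite -E; elim: D E
  => {H K} [H|H H' /C_counary [G [D ->]]|H I K _ IH1 _ IH2|] //.
by move=> /IH2 /esym /IH1.
Qed.

Hypothesis p_gt0 : 0 < p.
Hypothesis C_wf : calc_wf C.

Lemma deriv_add_rule_dominated N H K : calc_wf N -> rule_dominated C N ->
  Defs.deriv (add_rule C N) H K -> struc_nonneg K ->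
  forall H0, Defs.closed H0 -> Defs.deriv C H0 H ->
  exists K0, [/\ Defs.closed K0, Defs.deriv C K0 K & struc_eval p H0 <= struc_eval p K0].
Proof.
move=> N_wf N_dom; have CN_wf := calc_wf_add_rule C_wf N_wf.
elim => {H K} [H|H H' CNH|H I K DI IH1 DK IH2|o H1 K1 H2 K2 D1 IH1 D2 IH2] Kn H0 H0c DH0.
- by exists H0.
- case: CNH => [CH|/N_dom/(_ H0 H0c DH0)//].
  by exists H0; split => //; exact: d_comp DH0 (d_rule CH).
- have [I0 [I0c DI0 le1]] := IH1 (deriv_struc_nonneg CN_wf DK Kn) H0 H0c DH0.
  have [K0 [K0c DK0 le2]] := IH2 Kn I0 I0c DI0.
  by exists K0; split => //; exact: le_trans le2.
- case: Kn => Kn1 Kn2.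
  have [H01 [H02 [EH0 DH01 DH02]]] := deriv_SOp_inv DH0.
  move: H0c; rewrite EH0 => -[H01c H02c].
  have [K01 [K01c DK01 le1]] := IH1 Kn1 H01 H01c DH01.
  have [K02 [K02c DK02 le2]] := IH2 Kn2 H02 H02c DH02.
  exists (SOp o K01 K02); split => //=; first exact: d_op.
  have H01n := deriv_struc_nonneg C_wf DH01 (deriv_struc_nonneg CN_wf D1 Kn1).
  have H02n := deriv_struc_nonneg C_wf DH02 (deriv_struc_nonneg CN_wf D2 Kn2).
  by rewrite le_aop_eval ?struc_eval_ge0.
Qed.

End Counary.

Lemma provability_eq_dominated C N K :
  (validities p C K `<=` validities p N K)%classic ->
  (forall x, validities p N K x -> exists2 y, validities p C K y & x <= y) ->
  provability p N K = provability p C K.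
Proof.
move=> CN dom; rewrite /provability.
case: pselect => [EN|NN]; case: pselect => [EC|NC] //.
- by exfalso; apply: NC; apply/seteqP; split => // x /CN; rewrite EN.
- by exfalso; apply: NN; apply/seteqP; split => // x /dom [y]; rewrite EC.
- apply/eqP; rewrite eq_le; apply/andP; split; last exact: ereal_sup_le.
  apply: ge_ereal_sup => x /dom [y Cy xy].
  exact: le_trans xy (ereal_sup_ubound Cy).
Qed.

Lemma admissible_of_dominated C N : 0 < p -> calc_wf C -> counary C ->
  calc_wf N -> rule_dominated C N -> admissible p C N.
Proof.
move=> p_gt0 C_wf C_counary N_wf N_dom K Kn.
apply: provability_eq_dominated.
  move=> x [H [Hc [DH ->]]]; exists H; split => //; split => //.
  by apply: sub_deriv DH => A B CA; left.
move=> x [H [Hc [DH ->]]].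
have [K0 [K0c DK0 le]] :=
  deriv_add_rule_dominated C_counary p_gt0 C_wf N_wf N_dom DH Kn Hc (d_id _ _).
by exists (struc_eval p K0) => //; exists K0.
Qed.

End Derivations.

Section TermRule.
Variables (R : realType) (F : choiceType) (p : \bar R) (n : nat).
Implicit Types (t : term R n) (H : struc R F).

Fixpoint term_inst (g : 'I_n -> struc R F) t : struc R F :=
  match t with
  | TVar i => g i
  | TCst r => SCst r
  | TOp o t1 t2 => SOp o (term_inst g t1) (term_inst g t2)
  end.

Lemma closed_term_inst g t :
  (forall i, Defs.closed (g i)) -> Defs.closed (term_inst g t).
Proof. by move=> gc; elim: t => [i|r|o t1 IH1 t2 IH2] //=. Qed.

Lemma struc_eval_term_inst g t :
  struc_eval p (term_inst g t) = term_eval p (fun i => struc_eval p (g i)) t.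
Proof. by elim: t => [i|r|o t1 IH1 t2 IH2] //=; rewrite IH1 IH2. Qed.

Lemma term_subst_nonneg (sg : 'I_n -> multiset F * multiset F) t :
  term_nonneg t -> struc_nonneg (term_subst (R:=R) sg t).
Proof. by elim: t => [i|r|o t1 IH1 t2 IH2] //= [/IH1 ? /IH2 ?]. Qed.

Lemma term_rule_wf (t s : term R n) : term_nonneg t -> term_nonneg s ->
  calc_wf (@term_rule R F n t s).
Proof. by move=> tn sn H H' [sg [-> ->]]; split; exact: term_subst_nonneg. Qed.

Variable C : calculus R F.
Hypotheses (C_wf : calc_wf C) (C_counary : counary C) (C_efq : has_EFQ C).
Variable sg : 'I_n -> multiset F * multiset F.

Lemma deriv_term_inst g t :
  (forall i, Defs.deriv C (g i) (SSeq (sg i).1 (sg i).2)) ->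
  Defs.deriv C (term_inst g t) (term_subst sg t).
Proof.
move=> Dg; elim: t => [i|r|o t1 IH1 t2 IH2] /=; [exact: Dg|exact: d_id|].
exact: d_op.
Qed.

Definition closed_derivs (g : 'I_n -> struc R F) :=
  forall i, Defs.closed (g i) /\ Defs.deriv C (g i) (SSeq (sg i).1 (sg i).2).

Lemma closed_derivs_ge0 g : closed_derivs g -> forall i, 0 <= struc_eval p (g i).
Proof.
move=> gD i; have [gc Dg] := gD i.
exact: struc_eval_ge0 gc (deriv_struc_nonneg C_wf Dg I).
Qed.

Lemma closed_derivs_EFQ : closed_derivs (fun=> SCst 0).
Proof. by move=> i; split => //; exact/d_rule/C_efq. Qed.

Lemma closed_derivs_max g1 g2 : closed_derivs g1 -> closed_derivs g2 ->
  exists2 g, closed_derivs g & forall i,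
    struc_eval p (g1 i) <= struc_eval p (g i) /\
    struc_eval p (g2 i) <= struc_eval p (g i).
Proof.
move=> g1D g2D.
exists (fun i => if struc_eval p (g1 i) <= struc_eval p (g2 i) then g2 i else g1 i).
  by move=> i; case: ifP.
by move=> i; case: ifP => // /negbT; rewrite -ltNge => /ltW.
Qed.

Hypothesis p_gt0 : 0 < p.

Lemma closed_deriv_term_subst t H : term_nonneg t -> Defs.closed H ->
  Defs.deriv C H (term_subst sg t) ->
  exists2 g, closed_derivs g &
    struc_eval p H <= term_eval p (fun i => struc_eval p (g i)) t.
Proof.
elim: t H => [i|r|o t1 IH1 t2 IH2] H /= tn Hc DH.
- exists (fun j => if j == i then H else SCst 0); last by rewrite eqxx.
  by move=> j; case: eqP => [->|_] //; exact: closed_derivs_EFQ.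
- rewrite (deriv_SCst_inv C_counary DH).
  by exists (fun=> SCst 0) => //; exact: closed_derivs_EFQ.
- case: tn => t1n t2n.
  have [H1 [H2 [EH DH1 DH2]]] := deriv_SOp_inv C_counary DH.
  move: Hc; rewrite EH => -[H1c H2c].
  have [g1 g1D le1] := IH1 _ t1n H1c DH1.
  have [g2 g2D le2] := IH2 _ t2n H2c DH2.
  have [g gD g_max] := closed_derivs_max g1D g2D.
  have H1n := deriv_struc_nonneg C_wf DH1 (term_subst_nonneg sg t1n).
  have H2n := deriv_struc_nonneg C_wf DH2 (term_subst_nonneg sg t2n).
  exists g => //=; rewrite le_aop_eval ?struc_eval_ge0 //.
  + apply: le_trans le1 (le_term_eval _ _ _ t1n) => //; first exact: closed_derivs_ge0.
    by move=> i; case: (g_max i).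
  + apply: le_trans le2 (le_term_eval _ _ _ t2n) => //; first exact: closed_derivs_ge0.
    by move=> i; case: (g_max i).
Qed.

End TermRule.

Lemma term_rule_dominated (R : realType) (F : choiceType) (p : \bar R) (n : nat)
    (C : calculus R F) (t s : term R n) :
  0 < p -> calc_wf C -> counary C -> has_EFQ C -> term_nonneg t ->
  (forall a : 'I_n -> \bar R, (forall i, 0 <= a i) ->
     term_eval p a t <= term_eval p a s) ->
  rule_dominated p C (@term_rule R F n t s).
Proof.
move=> p_gt0 C_wf C_counary C_efq tn ts H H' [sg [-> ->]] H0 H0c DH0.
have [g gD le] := closed_deriv_term_subst C_wf C_counary C_efq p_gt0 tn H0c DH0.
exists (term_inst g s); split.
- by apply: closed_term_inst => i; case: (gD i).
- by apply: deriv_term_inst => i; case: (gD i).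
- rewrite struc_eval_term_inst; apply: le_trans le (ts _ _).
  exact: closed_derivs_ge0 gD.
Qed.

Theorem mainTheorem4 (R : realType) (F : choiceType) (p : \bar R) (n : nat)
  (t s : term R n) :
  0 < p ->
  term_nonneg t -> term_nonneg s ->
  (forall a : 'I_n -> \bar R, (forall i, 0 <= a i) ->
     term_eval p a t <= term_eval p a s) ->
  forall C : calculus R F, calc_wf C -> counary C -> has_EFQ C ->
    admissible p C (@term_rule R F n t s).
Proof.
move=> p_gt0 tn sn ts C C_wf C_counary C_efq.
apply: admissible_of_dominated => //; first exact: term_rule_wf.
exact: term_rule_dominated.
Qed.
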